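(* Let $N>2$ be an odd positive integer with smallest prime factor $p$, and let $K\ge N$ be an integer. Let $a_2,a_1\in\mathbb{Z}_N$ with $\gcd(a_2,N)=1$, and let $f:\mathbb{Z}_N\to\mathbb{Z}_K$ be defined by $f(x)=\phi(a_2x^2+a_1x)$, where $\phi:\mathbb{Z}_N\to\mathbb{Z}_K$ sends the class of $y\in\{0,\dots,N-1\}$ to the class of $y$ modulo $K$. For $0\le k<N$ let $\mathbf{a}_k=(a_k(0),\dots,a_k(K-1))$ with $a_k(t)=\omega_K^{tf(k)}$. Let $\mathbf{h}_0,\dots,\mathbf{h}_{N-1}$ be unimodular complex sequences of length $N$ such that for all $0\le i\ne j<N$ and all $0\le v<N$, $$\Big|\sum_{n=0}^{N-1}h_i(n)h_j^*(n)\Big|\le 1,\qquad \Big|\sum_{n=0}^{N-1}h_i(n)h_j^*(n)\omega_N^{nv}\Big|<N.$$ For $0\le i<N$ define $\mathbf{s}_i$ of length $NK$ by $s_i(tN+k)=h_i(k)a_k(t)$ ($0\le t<K$, $0\le k<N$) and let $\mathcal{S}=\{\mathbf{s}_0,\dots,\mathbf{s}_{N-1}\}$. Then $\mathcal{S}$ is an aperiodic $(N,NK,\Pi,K+p-1)$-LAZ sequence set, where (1) $\Pi=(-p,p)\times(-N,N)$ if $K=N$; (2) $\Pi=(-p,p)\times(-K+N-1,K-N+1)$ if $N<K<2N-1$; (3) $\Pi=(-p,p)\times(-K,K)$ if $K\ge 2N-1$.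
   Context: $\omega_L=e^{2\pi\sqrt{-1}/L}$, $z^*$ is complex conjugation, unimodular means all entries have modulus 1. For sequences $\mathbf{a},\mathbf{b}$ of length $L$, the aperiodic cross-ambiguity function is $\hat{AF}_{\mathbf{a},\mathbf{b}}(\tau,v)=\sum_{t=0}^{L-1-\tau}a(t)b^*(t+\tau)\omega_L^{vt}$ for $0\le\tau\le L-1$, $\hat{AF}_{\mathbf{a},\mathbf{b}}(\tau,v)=\sum_{t=-\tau}^{L-1}a(t)b^*(t+\tau)\omega_L^{vt}$ for $-L<\tau<0$, and $0$ for $|\tau|\ge L$; $\hat{AF}_{\mathbf{a}}=\hat{AF}_{\mathbf{a},\mathbf{a}}$. A set of $M$ sequences of length $L$ is an $(M,L,\Pi,\hat\theta)$-LAZ aperiodic sequence set if $|\hat{AF}_{\mathbf{a}}(\tau,v)|\le\hat\theta$ for all sequences $\mathbf{a}$ in the set and all integer $(0,0)\ne(\tau,v)\in\Pi$, and $|\hat{AF}_{\mathbf{a},\mathbf{b}}(\tau,v)|\le\hat\theta$ for all distinct $\mathbf{a},\mathbf{b}$ in the set and all integer $(\tau,v)\in\Pi$. *)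

From mathcomp Require Import all_boot all_order all_algebra.
From mathcomp Require Import complex.
From mathcomp Require Import reals trigo.

Import Order.TTheory GRing.Theory Num.Theory.
Local Open Scope ring_scope.
Local Open Scope complex_scope.

Definition omega (R : realType) (L : nat) : R[i] :=
  (cos (2 * pi / L%:R))%:C + 'i * (sin (2 * pi / L%:R))%:C.

(* Sequences of length L are functions nat -> R[i]; only the entries
   0 .. L-1 are ever used. *)

Definition aperAF (R : realType) (L : nat) (a b : nat -> R[i]) (tau v : int)
  : R[i] :=
  if (`|tau|%N >= L)%N then 0
  else if (0 <= tau)%R then
    \sum_(0 <= t < L - `|tau|%N) a t * (b (t + `|tau|%N)%N)^* * omega R L ^ (v * t%:Z)
  else
    \sum_(`|tau|%N <= t < L) a t * (b (t - `|tau|%N)%N)^* * omega R L ^ (v * t%:Z).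

Definition LAZ_aperiodic (R : realType) (M L : nat) (s : 'I_M -> nat -> R[i])
  (Pi : int -> int -> Prop) (theta : R) : Prop :=
  (forall (i : 'I_M) (tau v : int), Pi tau v -> (tau, v) != (0%Z, 0%Z) ->
     `|aperAF R L (s i) (s i) tau v| <= theta%:C) /\
  (forall (i j : 'I_M) (tau v : int), i != j -> Pi tau v ->
     `|aperAF R L (s i) (s j) tau v| <= theta%:C).

Definition open_box (A B : int) (tau v : int) : Prop :=
  (- A < tau < A)%R /\ (- B < v < B)%R.

(* The sequence a_k = (omega_K^{t f(k)})_{t<K} with
   f(x) = phi(a2 x^2 + a1 x), phi : Z_N -> Z_K, y mod N |-> y mod K.
   Since 0 <= y < N <= K, the representative of f(k) in {0..K-1} is
   (a2 k^2 + a1 k) mod N. *)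
Definition fquad (N a2 a1 k : nat) : nat := ((a2 * k ^ 2 + a1 * k) %% N)%N.

Definition seq_a (R : realType) (N K a2 a1 k t : nat) : R[i] :=
  omega R K ^+ (t * fquad N a2 a1 k)%N.

Definition seq_s (R : realType) (N K a2 a1 : nat) (h : 'I_N -> nat -> R[i])
  (i : 'I_N) (m : nat) : R[i] :=
  h i (m %% N)%N * seq_a R N K a2 a1 (m %% N)%N (m %/ N)%N.

From mathcomp Require Import all_boot all_order all_algebra.
From mathcomp Require Import complex.
From mathcomp Require Import reals trigo.
From mathcomp Require Import ring zify.
Import Order.TTheory GRing.Theory Num.Theory.
Local Open Scope ring_scope.

(* Write an index of a sequence of length NK as m = tN + k with 0 <= k < N.
   Since s_i(tN + k) = h_i(k) w_K^(t f(k)), the term of AF(tau, v) at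
   m = tN + k is its term at m = k times x_k^t, where
   x_k = w_K^(D_k + v) and D_k = f(k) - f(k + tau mod N).  Hence AF(tau, v) is a
   sum over k of unimodular coefficients times geometric sums of x_k over K
   terms, or over K - 1 terms for the tau indices k with k + tau >= N; such a
   sum has modulus at most K when x_k = 1 and at most 1 otherwise.  For
   0 < tau < p and v in the Doppler range, x_k = 1 for at most one k: the
   Doppler range turns K | D_k1 + v and K | D_k2 + v into D_k1 = D_k2 mod N,
   while D_k = -(2 a2 tau k + a2 tau^2 + a1 tau) mod N and 2 a2 tau is prime
   to N.  This gives |AF| <= K + tau <= K + p - 1.  Negative shifts reduce to
   positive ones, and for tau = 0 the geometric sums vanish unless v = 0, where
   AF = K sum_n h_i(n) h_j(n)^*. *)

Section UnitCircle.
Context {C : numClosedFieldType}.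
Implicit Types (x : C) (z : int).

Lemma norm1_neq0 x : `|x| = 1 -> x != 0.
Proof. by move=> x1; rewrite -normr_eq0 x1 oner_eq0. Qed.

Lemma normXz_norm1 x z : `|x| = 1 -> `|x ^ z| = 1.
Proof.
move=> x1; case: z => n; first by rewrite -exprnP normrX x1 expr1n.
by rewrite NegzE -exprnN normfV normrX x1 expr1n invr1.
Qed.

Lemma conjC_norm1 x : `|x| = 1 -> x^* = x^-1.
Proof. by move=> x1; rewrite invC_norm x1 expr1n invr1 mul1r. Qed.

Lemma conjCXz_norm1 x z : `|x| = 1 -> (x ^ z)^* = x ^ (- z).
Proof.
by move=> x1; rewrite conjC_norm1 ?normXz_norm1 // invr_expz.
Qed.

End UnitCircle.

Lemma prim_expz_eq1 (F : unitRingType) n (w : F) z : n.-primitive_root w ->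
  (w ^ z == 1) = (n%:Z %| z)%Z.
Proof.
move=> prim_w; case: z => m; first by rewrite -exprnP -(prim_order_dvd prim_w).
by rewrite NegzE -exprnN invr_eq1 -(prim_order_dvd prim_w) dvdzE absz_nat abszN.
Qed.

Lemma sum_expr_root1 [F : idomainType] [x : F] [K : nat] :
  x ^+ K = 1 -> x != 1 -> \sum_(0 <= t < K) x ^+ t = 0.
Proof.
move=> xK x1; apply/eqP; have := subrX1 x K.
rewrite xK subrr big_mkord => /esym/eqP.
by rewrite mulf_eq0 subr_eq0 (negbTE x1).
Qed.

Lemma norm_sum_expr_root1_le (C : numClosedFieldType) (x : C) K (d : bool) :
  `|x| = 1 -> x ^+ K = 1 ->
  `|\sum_(0 <= t < K - d) x ^+ t| <= (if x == 1 then K%:R else 0) + d%:R.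
Proof.
move=> x1 xK; have [->|xn1] := eqVneq x 1.
  rewrite (eq_bigr (fun=> 1)) => [|t _]; last by rewrite expr1n.
  by rewrite sumr_const_nat subn0 normr_nat -natrD ler_nat; lia.
case: d => /=; last by rewrite subn0 sum_expr_root1 // normr0 add0r.
case: K xK => [|K] xK; first by rewrite big_geq // normr0 add0r ler01.
have := sum_expr_root1 xK xn1; rewrite big_nat_recr //= subn1 /= => /eqP.
by rewrite addr_eq0 => /eqP->; rewrite normrN normrX x1 expr1n add0r.
Qed.

Lemma dvdz_small [d : nat] [x : int] : (d%:Z %| x)%Z -> (`|x| < d)%N -> x = 0.
Proof.
rewrite dvdzE absz_nat => d_dvd x_lt; apply/eqP; rewrite -absz_eq0.
by apply: contraTT x_lt => x0; rewrite -leqNgt dvdn_leq // lt0n.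
Qed.

Lemma coprime_lt_pdiv N t : (0 < t < pdiv N)%N -> coprime N t.
Proof.
case/andP=> t_gt0 t_lt; rewrite /coprime.
have g_gt0 : (0 < gcdn N t)%N by rewrite gcdn_gt0 t_gt0 orbT.
case: (ltngtP (gcdn N t) 1) => [|g_gt1|//]; first by lia.
have := pdiv_min_dvd g_gt1 (dvdn_gcdl N t).
by have := dvdn_leq t_gt0 (dvdn_gcdr N t); lia.
Qed.

Lemma sum_nat_wrap N tau : (tau <= N)%N ->
  (\sum_(0 <= k < N) (N <= k + tau))%N = tau.
Proof.
move=> tau_le; rewrite (big_cat_nat (n := N - tau)) ?leq_subr //=.
rewrite big1_seq => [|k]; last first.
  by rewrite mem_index_iota => /andP[_ k_lt]; apply/eqP; rewrite eqb0 -ltnNge; lia.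
rewrite (eq_big_nat _ _ (F2 := fun=> 1%N)) => [|k /andP[k_ge _]]; last first.
  by apply/eqP; rewrite eqb1; lia.
by rewrite sum_nat_const_nat muln1; lia.
Qed.

Lemma ler_sum_if_unique (D : numDomainType) (c : D) n (P : pred nat) : 0 <= c ->
  {in gtn n &, forall k1 k2, P k1 -> P k2 -> k1 = k2} ->
  \sum_(0 <= k < n) (if P k then c else 0) <= c.
Proof.
move=> c_ge0 P_uniq; rewrite big_mkord.
have [k0 Pk0|noP] := pickP (fun k : 'I_n => P k); last first.
  by rewrite big1 // => k _; rewrite noP.
rewrite (bigD1 k0) //= Pk0 big1 ?addr0 // => k /negbTE k_neq.
case: ifP => // Pk; move: k_neq; rewrite (_ : k = k0) ?eqxx //.
by apply: val_inj; apply: P_uniq => //; rewrite inE ltn_ord.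
Qed.

Lemma sum_nat_mul_shift (V : nmodType) (G : nat -> V) N K tau :
  (tau <= N)%N ->
  \sum_(0 <= m < N * K - tau) G m =
  \sum_(0 <= k < N) \sum_(0 <= t < K - (N <= k + tau)) G (t * N + k)%N.
Proof.
move=> tau_le.
rewrite (big_nat_widen _ _ (N * K)) ?leq_subr // big_mkcond /=.
rewrite mulnC big_nat_mul /=.
under eq_big_nat => t _ do rewrite -[(t * N)%N]add0n big_addn mulSn addnK.
rewrite exchange_big_nat; apply: eq_big_nat => k /andP[_ k_lt].
rewrite [RHS](big_nat_widen _ _ K) ?leq_subr // [RHS]big_mkcond.
apply: eq_big_nat => t /andP[_ t_lt]; rewrite addnC.
suff -> : (t * N + k < K * N - tau)%N = (t < K - (N <= k + tau))%N by [].
by case: leqP => wrap /=; apply/idP/idP; nia.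
Qed.

(* Pi = (-p, p) x (-doppler_bound N K, doppler_bound N K) in all three cases. *)
Definition doppler_bound (N K : nat) : int :=
  if K == N then N%:Z else if (K < 2 * N - 1)%N then (K - N + 1)%:Z else K%:Z.

Lemma doppler_bound_le [N K : nat] : (N <= K)%N -> doppler_bound N K <= K%:Z.
Proof. by rewrite /doppler_bound; case: eqP => [->|_]; [lia | case: ifP; lia]. Qed.

Lemma doppler_dvdz_congr [N K : nat] [x y v : int] : (N <= K)%N ->
  (`|x| < N)%N -> (`|y| < N)%N -> - doppler_bound N K < v < doppler_bound N K ->
  (K%:Z %| x + v)%Z -> (K%:Z %| y + v)%Z -> (N%:Z %| x - y)%Z.
Proof.
move=> N_leK x_lt y_lt v_bd Kxv Kyv.
have Kxy : (K%:Z %| x - y)%Z.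
  by rewrite (_ : x - y = (x + v) - (y + v)); [exact: rpredB | ring].
move: v_bd; rewrite /doppler_bound; case: eqP => [<- //|K_neqN].
case: ifP => [K_lt|K_ge] v_bd.
  have xv0 : x + v = 0 by apply: (dvdz_small Kxv); lia.
  have yv0 : y + v = 0 by apply: (dvdz_small Kyv); lia.
  by rewrite (_ : x - y = 0) ?dvdz0 //; lia.
by rewrite (dvdz_small Kxy) ?dvdz0 //; lia.
Qed.

Definition fquad_diff (N a2 a1 tau k : nat) : int :=
  (fquad N a2 a1 k)%:Z - (fquad N a2 a1 ((k + tau) %% N))%:Z.

Lemma norm_fquad_diff_lt N a2 a1 tau k :
  (0 < N)%N -> (`|fquad_diff N a2 a1 tau k| < N)%N.
Proof.
move=> N_gt0; have fquad_lt m : (fquad N a2 a1 m < N)%N := ltn_pmod _ N_gt0.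
by rewrite /fquad_diff; have := fquad_lt k; have := fquad_lt ((k + tau) %% N)%N; lia.
Qed.

Lemma fquad_diff_dvdz N a2 a1 tau k :
  (N%:Z %| fquad_diff N a2 a1 tau k + (a2 * tau * (2 * k + tau) + a1 * tau)%N%:Z)%Z.
Proof.
have modn_intE m : (m %% N)%N%:Z = m%:Z - (m %/ N)%N%:Z * N%:Z.
  by rewrite {2}(divn_eq m N) PoszD PoszM addrAC subrr add0r.
rewrite /fquad_diff /fquad -!mulnn !modn_intE !PoszD !PoszM !modn_intE !PoszD.
(* q1 and q2 are the quotients in the two reductions defining fquad, and r is
   the quotient of k + tau by N. *)
set q1 := ((_ %/ N)%N)%:Z; set r := ((_ %/ N)%N)%:Z; set q2 := ((_ %/ N)%N)%:Z.
apply/dvdzP.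
by exists (q2 - q1 + a2%:Z * (2 * (k%:Z + tau%:Z) * r - r ^+ 2 * N%:Z) + a1%:Z * r); ring.
Qed.

Lemma fquad_diff_inj [N a2 a1 tau k1 k2 : nat] :
  odd N -> coprime a2 N -> (0 < tau < pdiv N)%N -> (k1 < N)%N -> (k2 < N)%N ->
  (N%:Z %| fquad_diff N a2 a1 tau k1 - fquad_diff N a2 a1 tau k2)%Z -> k1 = k2.
Proof.
move=> oddN a2_coprime tau_bd k1_lt k2_lt N_dvdD.
have N_dvd : (N%:Z %| (2 * a2 * tau)%N%:Z * (k1%:Z - k2%:Z))%Z.
  case/dvdzP: (fquad_diff_dvdz N a2 a1 tau k1) => q1 E1.
  case/dvdzP: (fquad_diff_dvdz N a2 a1 tau k2) => q2 E2.
  case/dvdzP: N_dvdD => q E; apply/dvdzP; exists (q1 - q2 - q).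
  by rewrite !mulrBl -E1 -E2 -E !PoszD !PoszM; ring.
rewrite Gauss_dvdzr in N_dvd; last first.
  rewrite coprimezE !absz_nat coprimeMr coprimeMr coprimen2 oddN coprime_sym a2_coprime.
  exact: coprime_lt_pdiv.
by apply/eqP; rewrite -eqz_nat -subr_eq0 (dvdz_small N_dvd) //; lia.
Qed.

Local Open Scope complex_scope.

Section ComplexExponential.
Variable R : realType.

Definition expi (x : R) : R[i] := (cos x)%:C + 'i * (sin x)%:C.

Lemma expiD x y : expi (x + y) = expi x * expi y.
Proof. by rewrite /expi cosD sinD; simpc; rewrite [_ * sin y + _]addrC. Qed.

Lemma expi0 : expi 0 = 1.
Proof. by rewrite /expi cos0 sin0; simpc. Qed.

Lemma expiMn n x : expi (n%:R * x) = expi x ^+ n.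
Proof.
elim: n => [|n IHn]; first by rewrite mul0r expi0 expr0.
by rewrite -natr1 mulrDl mul1r expiD IHn exprSr.
Qed.

Lemma norm_expi x : `|expi x| = 1.
Proof.
apply/eqP; rewrite -sqrp_eq1 ?normr_ge0 // sqr_normc /expi; simpc.
by rewrite -!expr2 cos2Dsin2 [sin x * _]mulrC addNr.
Qed.

Lemma expi_2pi : expi (pi *+ 2) = 1.
Proof. by rewrite /expi cos2pi sin2pi; simpc. Qed.

Lemma expi_neq1 x : 0 < x < pi *+ 2 -> expi x != 1.
Proof.
case/andP=> x_gt0 x_lt2pi; apply/negP=> /eqP ex1.
have sinx0 : sin x = 0 by move: ex1; rewrite /expi; simpc; case.
have [x_ltpi|] := ltP x pi.
  by move: (@sin_gt0_pi _ x); rewrite x_gt0 x_ltpi sinx0 ltxx => /(_ isT).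
rewrite le_eqVlt => /orP[/eqP xpi|pi_ltx].
  move: ex1; rewrite -xpi /expi cospi sinpi; simpc; case=> /eqP.
  by rewrite -subr_eq0 -opprD oppr_eq0 -mulr2n pnatr_eq0.
have : 0 < sin (x - pi) by apply: sin_gt0_pi; rewrite subr_gt0 pi_ltx ltrBlDr -mulr2n.
by rewrite -oppr_lt0 -sinDpi subrK sinx0 ltxx.
Qed.

Lemma omegaE L : omega R L = expi (2 * pi / L%:R).
Proof. by []. Qed.

Lemma norm_omega L : `|omega R L| = 1.
Proof. exact: norm_expi. Qed.

Lemma omega_prim L : (0 < L)%N -> L.-primitive_root (omega R L).
Proof.
move=> L_gt0; have L0 : L%:R != 0 :> R by rewrite pnatr_eq0 -lt0n.
have omegaL : omega R L ^+ L = 1.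
  by rewrite omegaE -expiMn mulrCA mulfV // mulr1 mulr_natl expi_2pi.
have [m prim_m m_dvdL] := prim_order_exists L_gt0 omegaL.
suff mL : m = L by rewrite -[X in X.-primitive_root _]mL.
have m_gt0 := prim_order_gt0 prim_m; have := dvdn_leq L_gt0 m_dvdL.
rewrite leq_eqVlt => /orP[/eqP //|m_ltL].
have /negP[] : omega R L ^+ m != 1.
  rewrite omegaE -expiMn; apply: expi_neq1.
  rewrite mulrCA mulr_gt0 ?divr_gt0 ?mulr_gt0 ?ltr0n ?pi_gt0 //=.
  rewrite -[pi *+ 2]mulr_natl -[ltRHS]mulr1 ltr_pM2l ?mulr_gt0 ?pi_gt0 //.
  by rewrite ltr_pdivrMr ?ltr0n // mul1r ltr_nat.
by rewrite prim_expr_order.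
Qed.

Lemma omega_mulnX N K : (0 < N)%N -> (0 < K)%N -> omega R (N * K) ^+ N = omega R K.
Proof.
move=> N_gt0 K_gt0; rewrite omegaE -expiMn omegaE natrM; congr expi.
by field; rewrite !pnatr_eq0 -!lt0n N_gt0 K_gt0.
Qed.

End ComplexExponential.

Section AmbiguityFunction.
Variables (R : realType) (L : nat).
Implicit Types (a b : nat -> R[i]) (v : int).

Lemma aperAF_nat a b (n : nat) v : (n < L)%N ->
  aperAF R L a b n v =
  \sum_(0 <= t < L - n) a t * (b (t + n)%N)^* * omega R L ^ (v * t%:Z).
Proof. by move=> n_lt; rewrite /aperAF absz_nat leqNgt n_lt. Qed.

Lemma norm_aperAF_oppz a b (n : nat) v : (0 < n)%N ->
  `|aperAF R L a b (- n%:Z) v| = `|aperAF R L b a n (- v)|.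
Proof.
move=> n_gt0; rewrite /aperAF abszN absz_nat; case: leqP => // n_lt.
rewrite oppr_ge0 lez_nat leqn0 gtn_eqF // le0z_nat.
rewrite -{1}[n]add0n big_addn -[in RHS]norm_conjC rmorph_sum.
have w1 := norm_omega R L; set w := omega R L in w1 *.
rewrite -[RHS]mul1r -(normXz_norm1 _ (v * n%:Z) w1) -normrM big_distrr /=.
congr `|_|; apply: eq_bigr => t _.
rewrite addnK !rmorphM /= conjCK conjCXz_norm1 // mulNr opprK PoszD mulrDr.
by rewrite expfzDr ?norm1_neq0 //; ring.
Qed.

End AmbiguityFunction.

Section SequenceSet.
Variables (R : realType) (N K a2 a1 : nat) (h : 'I_N -> nat -> R[i]).
Hypotheses (N_gt0 : (0 < N)%N) (N_leK : (N <= K)%N)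
  (h_norm : forall i n, (n < N)%N -> `|h i n| = 1).

Local Notation s := (seq_s R N K a2 a1 h).
Local Notation wK := (omega R K).

Let K_gt0 : (0 < K)%N := leq_trans N_gt0 N_leK.

Definition af_ratio (tau : nat) (v : int) (k : nat) : R[i] :=
  wK ^ (fquad_diff N a2 a1 tau k + v).

Lemma seq_s_mulnDl i t m :
  s i (t * N + m) = s i m * wK ^+ (t * fquad N a2 a1 (m %% N)).
Proof. by rewrite /seq_s /seq_a modnMDl divnMDl // mulnDl exprD mulrAC mulrA. Qed.

Lemma seq_s_small i k : (k < N)%N -> s i k = h i k.
Proof.
by move=> k_lt; rewrite /seq_s /seq_a modn_small ?divn_small // mul0n expr0 mulr1.
Qed.

Lemma norm_seq_s i m : `|s i m| = 1.
Proof.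
by rewrite /seq_s /seq_a normrM h_norm ?ltn_pmod // normrX norm_omega expr1n mulr1.
Qed.

Lemma af_ratioXK tau v k : af_ratio tau v k ^+ K = 1.
Proof. by rewrite exprnP exprzAC -exprnP prim_expr_order ?omega_prim // exp1rz. Qed.

Lemma af_ratio_eq1 tau v k :
  (af_ratio tau v k == 1) = (K%:Z %| fquad_diff N a2 a1 tau k + v)%Z.
Proof. exact/prim_expz_eq1/omega_prim. Qed.

Lemma aperAF_summand_mulnDl i j tau v t k : (k < N)%N ->
  s i (t * N + k) * (s j (t * N + k + tau))^* * omega R (N * K) ^ (v * (t * N + k)%N%:Z)
  = s i k * (s j (k + tau))^* * omega R (N * K) ^ (v * k%:Z) * af_ratio tau v k ^+ t.
Proof.
move=> k_lt; have w1 := norm_omega R K; have w0 : wK != 0 by exact: norm1_neq0.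
rewrite -addnA !seq_s_mulnDl (modn_small k_lt) rmorphM /= !exprnP conjCXz_norm1 //.
have -> : omega R (N * K) ^ (v * (t * N + k)%N%:Z) =
          omega R (N * K) ^ (v * k%:Z) * wK ^ (v * t%:Z).
  rewrite -(omega_mulnX R N K N_gt0 K_gt0) exprnP exprz_exp.
  rewrite -expfzDr ?norm1_neq0 ?norm_omega //.
  by congr (_ ^ _); rewrite PoszD PoszM; ring.
rewrite /af_ratio exprz_exp /fquad_diff.
rewrite (_ : (_ - _ + v) * t%:Z = (t * fquad N a2 a1 k)%N%:Z
               + - (t * fquad N a2 a1 ((k + tau) %% N))%N%:Z + v * t%:Z).
  by rewrite !expfzDr // (mulrACA (s i k)) [LHS]mulrACA.
by rewrite !PoszM; ring.
Qed.

Lemma aperAF_seq_s_nat i j (tau : nat) v : (tau < N)%N ->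
  aperAF R (N * K) (s i) (s j) tau v =
  \sum_(0 <= k < N) s i k * (s j (k + tau))^* * omega R (N * K) ^ (v * k%:Z) *
    \sum_(0 <= t < K - (N <= k + tau)) af_ratio tau v k ^+ t.
Proof.
move=> tau_lt; rewrite aperAF_nat; last by rewrite (leq_trans tau_lt) // leq_pmulr.
rewrite sum_nat_mul_shift; last exact: ltnW.
apply: eq_big_nat => k /andP[_ k_lt].
by rewrite big_distrr; apply: eq_bigr => t _; apply: aperAF_summand_mulnDl.
Qed.

Lemma norm_aperAF_seq_s_le i j (tau : nat) v : (tau < N)%N ->
  `|aperAF R (N * K) (s i) (s j) tau v| <=
  \sum_(0 <= k < N) ((if af_ratio tau v k == 1 then K%:R else 0) + (N <= k + tau)%:R).
Proof.
move=> tau_lt; rewrite aperAF_seq_s_nat //.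
apply: le_trans (ler_norm_sum _ _ _) _; rewrite !big_nat; apply: ler_sum => k _.
rewrite normrM normrM normrM norm_conjC !norm_seq_s normXz_norm1 ?norm_omega // !mul1r.
apply: norm_sum_expr_root1_le; last exact: af_ratioXK.
exact: normXz_norm1 (norm_omega R K).
Qed.

Lemma af_ratio_eq1_unique tau v :
  odd N -> coprime a2 N -> (0 < tau < pdiv N)%N ->
  - doppler_bound N K < v < doppler_bound N K ->
  {in gtn N &, forall k1 k2, af_ratio tau v k1 == 1 -> af_ratio tau v k2 == 1 -> k1 = k2}.
Proof.
move=> oddN a2_coprime tau_bd v_bd k1 k2 k1_lt k2_lt; rewrite !af_ratio_eq1 => Kk1 Kk2.
have D_lt k := norm_fquad_diff_lt N a2 a1 tau k N_gt0.
have N_dvd := doppler_dvdz_congr N_leK (D_lt k1) (D_lt k2) v_bd Kk1 Kk2.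
exact: fquad_diff_inj oddN a2_coprime tau_bd k1_lt k2_lt N_dvd.
Qed.

Lemma norm_aperAF_seq_s_pos i j tau v :
  odd N -> coprime a2 N -> (0 < tau < pdiv N)%N ->
  - doppler_bound N K < v < doppler_bound N K ->
  `|aperAF R (N * K) (s i) (s j) tau v| <= (K + tau)%:R.
Proof.
move=> oddN a2_coprime tau_bd v_bd.
have tau_lt : (tau < N)%N.
  by case/andP: tau_bd => _ /leq_trans; apply; apply: pdiv_leq.
apply: le_trans (norm_aperAF_seq_s_le i j tau v tau_lt) _.
rewrite big_split /= -natr_sum sum_nat_wrap; last exact: ltnW.
rewrite natrD lerD2r.
by apply: ler_sum_if_unique; [exact: ler0n | exact: af_ratio_eq1_unique].
Qed.

Lemma aperAF_seq_s_pure_doppler i j v : v != 0 -> - K%:Z < v < K%:Z ->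
  aperAF R (N * K) (s i) (s j) 0 v = 0.
Proof.
move=> v_neq0 v_bd; rewrite aperAF_seq_s_nat // big_nat big1 // => k /andP[_ k_lt].
rewrite addn0 leqNgt k_lt subn0 sum_expr_root1 ?mulr0 ?af_ratioXK //.
rewrite af_ratio_eq1 /fquad_diff addn0 (modn_small k_lt) subrr add0r.
by apply: contra v_neq0 => /dvdz_small ->; lia.
Qed.

Lemma aperAF_seq_s_origin i j :
  aperAF R (N * K) (s i) (s j) 0 0 = K%:R * \sum_(0 <= k < N) h i k * (h j k)^*.
Proof.
rewrite aperAF_seq_s_nat // mulr_sumr; apply: eq_big_nat => k /andP[_ k_lt].
rewrite addn0 leqNgt k_lt subn0 !seq_s_small // mul0r expr0z mulr1.
rewrite /af_ratio /fquad_diff addn0 (modn_small k_lt) subrr addr0 expr0z.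
rewrite (eq_bigr (fun=> 1)) => [|t _]; last by rewrite expr1n.
by rewrite sumr_const_nat subn0 mulr_natl mulr_natr.
Qed.

Lemma norm_aperAF_seq_s_box i j tau v :
  odd N -> coprime a2 N ->
  (i != j -> `|\sum_(0 <= n < N) h i n * (h j n)^*| <= 1) ->
  open_box (pdiv N)%:Z (doppler_bound N K) tau v ->
  (i != j) || ((tau, v) != (0%Z, 0%Z)) ->
  `|aperAF R (N * K) (s i) (s j) tau v| <= ((K + pdiv N - 1)%:R : R)%:C.
Proof.
move=> oddN a2_coprime h_corr [tau_bd v_bd] nontrivial.
have p_gt0 := pdiv_gt0 N; have B_le := doppler_bound_le N_leK.
rewrite rmorph_nat; case: tau tau_bd nontrivial => [[|n]|n] tau_bd nontrivial.
- have [v0 | v_neq0] := eqVneq v 0; last first.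
    by rewrite aperAF_seq_s_pure_doppler ?normr0 ?ler0n //; lia.
  move: nontrivial; rewrite v0 eqxx orbF => /h_corr corr_le.
  rewrite aperAF_seq_s_origin normrM normr_nat.
  by apply: le_trans (ler_wpM2l (ler0n _ _) corr_le) _; rewrite mulr1 ler_nat; lia.
- apply: le_trans (norm_aperAF_seq_s_pos i j n.+1 v oddN a2_coprime _ v_bd) _.
    by lia.
  by rewrite ler_nat; lia.
- rewrite NegzE norm_aperAF_oppz //.
  apply: le_trans (norm_aperAF_seq_s_pos j i n.+1 (- v) oddN a2_coprime _ _) _; try lia.
  by rewrite ler_nat; lia.
Qed.

End SequenceSet.

Theorem corollary2 (R : realType) (N K : nat) (a2 a1 : 'I_N)
  (h : 'I_N -> nat -> R[i]) :
  (2 < N)%N -> odd N -> (N <= K)%N -> coprime a2 N ->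
  (forall (i : 'I_N) (n : nat), (n < N)%N -> `|h i n| = 1) ->
  (forall (i j : 'I_N), i != j ->
     `|\sum_(0 <= n < N) h i n * (h j n)^*| <= 1) ->
  (forall (i j : 'I_N) (v : nat), i != j -> (v < N)%N ->
     `|\sum_(0 <= n < N) h i n * (h j n)^* * omega R N ^+ (n * v)| < N%:R) ->
  let p := pdiv N in
  LAZ_aperiodic R N (N * K) (seq_s R N K a2 a1 h)
    (open_box p%:Z
       (if K == N then N%:Z
        else if (K < 2 * N - 1)%N then (K - N + 1)%:Z
        else K%:Z))
    (K + p - 1)%:R.
Proof.
move=> N_gt2 oddN N_leK a2_coprime h_norm h_corr _ p.
have N_gt0 : (0 < N)%N by apply: ltn_trans N_gt2.
split=> [i tau v box nonzero | i j tau v i_neq_j box].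
  by apply: norm_aperAF_seq_s_box => //; [exact: h_corr | rewrite nonzero orbT].
by apply: norm_aperAF_seq_s_box => //; [exact: h_corr | rewrite i_neq_j].
Qed.
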